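(* Let $q$ be a prime power and let $m,r,k,\alpha$ be positive integers. If $(\Sigma,\mathcal{A})$ with $\Sigma=\mathrm{PG}(m-1,q)$ is an $(m;\,r+1,\,k,\,r,\,\alpha,\,1)$-functional repair code, then $$m\le \sum_{i=1}^{k}\min\bigl(\alpha,\,(r-k)+i\bigr).$$
   Context: Dimensions are projective: a $(d-1)$-dimensional subspace of $\mathrm{PG}(m-1,q)$ corresponds to a $d$-dimensional subspace of $\mathbb{F}_q^m$, and $\langle\cdot\rangle$ denotes span. A subspace $U'$ of $\Sigma=\mathrm{PG}(m-1,q)$ is obtained from a set $\mathcal{U}$ of subspaces of $\Sigma$ by $(r,\beta)$-repair if there are $r$ distinct members $U_{i_1},\dots,U_{i_r}$ of $\mathcal{U}$ and, for each $j$, a $(\beta-1)$-dimensional subspace $W_{i_j}\subseteq U_{i_j}$ such that $U'\subseteq\langle W_{i_1},\dots,W_{i_r}\rangle$. An $(m;n,k,r,\alpha,\beta)$-functional repair code is a pair $(\Sigma,\mathcal{A})$ where $\Sigma=\mathrm{PG}(m-1,q)$ and $\mathcal{A}$ is a collection of $(n-1)$-sets of $(\alpha-1)$-dimensional subspaces of $\Sigma$ such that: (Recovery) every $\mathcal{U}\in\mathcal{A}$ contains $k$ members whose span is $\Sigma$; (Repair) for every $\mathcal{U}=\{U_1,\dots,U_{n-1}\}\in\mathcal{A}$ there is an $(\alpha-1)$-dimensional subspace $U_n$ obtained from $\mathcal{U}$ by $(r,\beta)$-repair such that $\mathcal{U}\cup\{U_n\}\setminus\{U_i\}\in\mathcal{A}$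 for every $i=1,\dots,n-1$. Standing assumptions: $m,n\ge2$, $1\le k<n$, $k\le r\le n-1$, $1\le\alpha\le m-1$, $1\le\beta\le\alpha$. *)

From HB Require Import structures.
From mathcomp Require Import all_boot all_order all_algebra all_field.
From mathcomp Require Import finmap.
Set Implicit Arguments. Unset Strict Implicit. Unset Printing Implicit Defensive.
Import GRing.Theory.
Local Open Scope fset_scope.

(* Sigma = PG(m-1,q) is modelled by the vector space V = F^m ('rV[F]_m) over a
   finite field F (q = #|F|); a projective (d-1)-subspace is a d-dimensional
   vector subspace {vspace V}; span <.> is the sum of subspaces. *)

Definition repair_from (F : fieldType) (V : vectType F) (r beta : nat)
    (U : {fset {vspace V}}) (U' : {vspace V}) : Prop :=
  exists (S : {fset {vspace V}}) (W : {vspace V} -> {vspace V}),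
    [/\ S `<=` U, #|` S| = r,
        (forall X, X \in S -> (W X <= X)%VS /\ \dim (W X) = beta)
      & (U' <= \sum_(X <- S) W X)%VS].

Definition functional_repair_code (F : finFieldType) (m n k r alpha beta : nat)
    (A : {fset {vspace 'rV[F]_m}} -> Prop) : Prop :=
  (forall U, A U -> #|` U| = n.-1 /\ (forall X, X \in U -> \dim X = alpha)) /\
  (forall U, A U -> exists S : {fset {vspace 'rV[F]_m}},
      [/\ S `<=` U, #|` S| = k & (\sum_(X <- S) X)%VS = fullv]) /\
  (forall U, A U -> exists Un : {vspace 'rV[F]_m},
      [/\ \dim Un = alpha, repair_from r beta U Un
        & forall Ui, Ui \in U -> A ((Un |` U) `\ Ui)]).

Arguments functional_repair_code {F} m n k r alpha beta A.

From HB Require Import structures.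
From mathcomp Require Import all_boot all_order all_algebra all_field.
From mathcomp Require Import finmap zify.
Set Implicit Arguments. Unset Strict Implicit. Unset Printing Implicit Defensive.
Import GRing.Theory.
Local Open Scope fset_scope.
Local Open Scope nat_scope.

(* Start from any member of the code and repair r times, each time discarding a
   node not produced by an earlier repair; afterwards all r nodes are repaired
   ones.  Since n = r + 1 and beta = 1, a repaired node lies in the span of one
   point from each of the r nodes present when it was made.  If t of those are
   earlier repaired nodes, it adds at most min(alpha, r - t) to their span.
   Hence any k nodes of the final member span at most sum_{t<k} min(alpha, r - t)
   dimensions, while recovery requires k of them to span the whole space F^m. *)

Section SumOfSubspaces.
Variables (K : fieldType) (vT : vectType K) (I : eqType).
Implicit Types (s : seq I) (f : I -> {vspace vT}) (V : {vspace vT}).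

Lemma subv_sum_seq s f V :
  (forall i, i \in s -> f i <= V)%VS -> (\sum_(i <- s) f i <= V)%VS.
Proof.
move=> sub_fV; rewrite big_seq_cond.
elim/big_ind: _ => [|U1 U2|i /andP[/sub_fV]] //; first exact: sub0v.
by rewrite subv_add => -> ->.
Qed.

Lemma sumv_sup_seq i s f V :
  i \in s -> (V <= f i)%VS -> (V <= \sum_(j <- s) f j)%VS.
Proof. by move=> s_i /subv_trans; apply; rewrite (big_rem i s_i) addvSl. Qed.

Lemma dimv_sum_lines s f :
  (forall i, i \in s -> \dim (f i) <= 1) -> \dim (\sum_(i <- s) f i) <= size s.
Proof.
move=> dim_f; apply: leq_trans (dimv_sum_leqif _) _.
by rewrite -sum1_size /= !big_seq leq_sum.
Qed.

End SumOfSubspaces.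

Definition repair_bound (alpha r s : nat) := \sum_(t < s) minn alpha (r - t).

Lemma repair_boundS alpha r s :
  repair_bound alpha r s.+1 = repair_bound alpha r s + minn alpha (r - s).
Proof. by rewrite /repair_bound big_ord_recr. Qed.

Lemma repair_boundE alpha r k : k <= r ->
  repair_bound alpha r k = \sum_(1 <= i < k.+1) minn alpha (r - k + i).
Proof.
move=> le_kr; rewrite /repair_bound -(big_mkord xpredT (fun t => minn alpha (r - t))).
rewrite big_add1 big_nat_rev /=.
by apply: eq_big_nat => i /andP[_ lt_ik]; congr minn; lia.
Qed.

Section RepairedSpan.
Variables (K : fieldType) (vT : vectType K).

Definition span_bounded alpha r (G : {fset {vspace vT}}) :=
  forall S, S `<=` G -> \dim (\sum_(X <- S) X) <= repair_bound alpha r #|` S|.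

Lemma span_bounded0 alpha r : span_bounded alpha r fset0.
Proof.
by move=> S; rewrite fsubset0 => /eqP->; rewrite big_seq_fset0 dim_vline eqxx.
Qed.

Variables (U : {fset {vspace vT}}) (W : {vspace vT} -> {vspace vT}) (Un : {vspace vT}).
Hypotheses (sub_W : forall X, X \in U -> (W X <= X)%VS)
           (dim_W : forall X, X \in U -> \dim (W X) <= 1)
           (sub_Un : (Un <= \sum_(X <- U) W X)%VS).

Lemma repaired_sub_span S : S `<=` U ->
  (Un <= \sum_(X <- S) X + \sum_(X <- U `\` S) W X)%VS.
Proof.
move=> sub_SU; apply: subv_trans sub_Un _; apply: subv_sum_seq => X U_X.
have [S_X | notS_X] := boolP (X \in S).
  by apply: subv_trans (addvSl _ _); apply: sumv_sup_seq S_X (sub_W U_X).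
apply: subv_trans (addvSr _ _); apply: sumv_sup_seq (subvv _).
by rewrite in_fsetD notS_X.
Qed.

Lemma dimv_add_repaired S : S `<=` U ->
  \dim (Un + \sum_(X <- S) X) <= \dim (\sum_(X <- S) X) + (#|` U| - #|` S|).
Proof.
move=> sub_SU; set T := (\sum_(X <- S) X)%VS.
have sub_UnT : (Un + T <= T + \sum_(X <- U `\` S) W X)%VS.
  by rewrite subv_add addvSl repaired_sub_span.
apply: leq_trans (dimvS sub_UnT) _; apply: leq_trans (dimv_add_leqif _ _) _.
rewrite leq_add2l -cardfsDS //; apply: dimv_sum_lines => X.
by rewrite in_fsetD => /andP[_ /dim_W].
Qed.

Lemma span_bounded_fsetU1 alpha G :
  G `<=` U -> Un \notin G -> \dim Un <= alpha ->
  span_bounded alpha #|` U| G -> span_bounded alpha #|` U| (Un |` G).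
Proof.
move=> sub_GU notG_Un dim_Un bounded_G S sub_S.
have [S_Un | notS_Un] := boolP (Un \in S); last first.
  by apply: bounded_G; rewrite -(fsetU1K notG_Un) fsubsetD1 sub_S.
have sub_S'G : S `\ Un `<=` G by rewrite -(fsetU1K notG_Un) fsetSD.
rewrite (big_fsetD1 Un S_Un) (cardfsD1 Un S) S_Un add1n repair_boundS.
apply: leq_trans _ (leq_add (bounded_G _ sub_S'G) (leqnn _)).
rewrite addn_minr leq_min; apply/andP; split.
  by apply: leq_trans (dimv_add_leqif _ _) _; rewrite addnC leq_add2l.
exact: dimv_add_repaired (fsubset_trans sub_S'G sub_GU).
Qed.

End RepairedSpan.

Section RepairCode.
Variables (F : finFieldType) (m r k alpha : nat) (A : {fset {vspace 'rV[F]_m}} -> Prop).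
Hypothesis code : functional_repair_code m r.+1 k r alpha 1 A.

Lemma code_card U : A U -> #|` U| = r.
Proof. by case: code => sizes _ /sizes[]. Qed.

Lemma code_repair_step U G :
  A U -> G `<=` U -> #|` G| < r -> span_bounded alpha r G ->
  exists U' G', [/\ A U', G' `<=` U', #|` G'| = #|` G|.+1 & span_bounded alpha r G'].
Proof.
move=> AU sub_GU lt_Gr bounded_G; have [_ [_ repair]] := code.
have [Un [dim_Un [S [W [sub_SU card_S W_lines sub_Un]]] A_swap]] := repair U AU.
have card_U := code_card AU.
have eq_SU : S = U by apply/eqP; rewrite eqEfcard sub_SU card_S card_U /=.
subst S; clear sub_SU card_S.
have [Ui] : exists Ui, Ui \in U `\` G.
  apply/fset0Pn; rewrite fsetD_eq0; apply: contraTN lt_Gr => /fsubset_leq_card.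
  by rewrite card_U -leqNgt.
rewrite in_fsetD => /andP[notG_Ui U_Ui].
have notU_Un : Un \notin U.
  apply/negP => U_Un; have := cardfsD1 Ui (Un |` U).
  rewrite (code_card (A_swap _ U_Ui)) cardfsU1 U_Un card_U in_fset1U U_Ui orbT /=.
  lia.
have notG_Un : Un \notin G by apply: contra notU_Un; apply: (fsubsetP sub_GU).
exists ((Un |` U) `\ Ui), (Un |` G); split.
- exact: A_swap.
- rewrite fsubsetD1 fsetUS //= in_fset1U negb_or notG_Ui andbT.
  by apply: contraNneq notU_Un => <-.
- by rewrite cardfsU1 notG_Un.
rewrite -card_U; apply: (span_bounded_fsetU1 (W := W)) => //.
- by move=> X /W_lines[].
- by move=> X /W_lines[_ ->].
- by rewrite dim_Un.
by rewrite card_U.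
Qed.

Lemma code_member_span_bounded :
  (exists U, A U) -> exists2 U, A U & span_bounded alpha r U.
Proof.
case=> U0 AU0.
have grow j : j <= r ->
    exists U G, [/\ A U, G `<=` U, #|` G| = j & span_bounded alpha r G].
  elim: j => [|j IHj] le_jr.
    by exists U0, fset0; split=> //; apply: span_bounded0.
  have [U [G [AU sub_GU card_G bounded_G]]] := IHj (ltnW le_jr).
  by rewrite -card_G in le_jr *; exact: code_repair_step AU sub_GU le_jr bounded_G.
have [U [G [AU sub_GU card_G bounded_G]]] := grow r (leqnn r).
suff eq_GU : G = U by exists U => //; rewrite -eq_GU.
by apply/eqP; rewrite eqEfcard sub_GU card_G (code_card AU) leqnn.
Qed.

End RepairCode.

Theorem mainTheorem1 (F : finFieldType) (m r k alpha : nat)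
    (A : {fset {vspace 'rV[F]_m}} -> Prop) :
  (* standing assumptions, with n = r + 1 and beta = 1 *)
  (2 <= m)%N -> (1 <= k)%N -> (k <= r)%N -> (1 <= alpha)%N -> (alpha <= m.-1)%N ->
  (* the code is a nonempty collection *)
  (exists U, A U) ->
  functional_repair_code m r.+1 k r alpha 1 A ->
  (m <= \sum_(1 <= i < k.+1) minn alpha (r - k + i))%N.
Proof.
move=> _ _ le_kr _ _ nonempty code.
have [U AU bounded_U] := code_member_span_bounded code nonempty.
have [_ [recovery _]] := code.
have [S [sub_SU card_S span_S]] := recovery U AU.
have := bounded_U S sub_SU.
by rewrite span_S dimvf dim_matrix mul1r card_S repair_boundE.
Qed.
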